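(* Let $n\ge 2$ and $m\in\mathbb{N}$. Let $$\mathrm{dom}(\mathcal{L})=\Big\{(d,b)\in\mathbb{R}^m\times\mathbb{R}^m:\ d_j>0,\ b_j>0,\ \sum_{j=1}^m b_j<1,\ \sigma_1<\sigma_2<\dots<\sigma_m\Big\},$$ where $\sigma_j=\kappa d_j^{n-2}/(4b_j)$ if $n>2$ and $\sigma_j=\pi d_j/(2b_j)$ if $n=2$, and let $\mathcal{L}(d,b)=(\sigma,\mu)$ with $\sigma=(\sigma_1,\dots,\sigma_m)$ and $\mu=(\mu_1,\dots,\mu_m)$, where $\mu_1<\dots<\mu_m$ are the roots of $$1+\sum_{j=1}^m\frac{\sigma_j b_j}{(1-\sum_{i=1}^m b_i)(\sigma_j-\lambda)}=0.$$ Then $\mathcal{L}$ is a bijection of $\mathrm{dom}(\mathcal{L})$ onto $$\mathcal{G}=\{(\sigma,\mu)\in\mathbb{R}^m\times\mathbb{R}^m:\ \sigma_j<\mu_j<\sigma_{j+1}\ (j=1,\dots,m-1),\ \sigma_m<\mu_m<\infty\}$$ (where also $\sigma_1>0$ for elements of the image), and the inverse is given by $$b_j=\frac{\rho_j}{1+\sum_{i=1}^m\rho_i},\qquad d_j=\begin{cases}\Big(\dfrac{4\sigma_j\rho_j}{\kappa(1+\sum_{i=1}^m\rho_i)}\Big)^{1/(n-2)},&n>2,\\[2mm] \dfrac{2\sigma_j\rho_j}{\pi(1+\sum_{i=1}^m\rho_i)},&n=2,\end{cases}$$ where $$\rho_j=\frac{\mu_j-\sigma_j}{\sigma_j}\prod_{i\in\{1,\dots,m\},\,i\ne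 j}\frac{\mu_i-\sigma_j}{\sigma_i-\sigma_j}.$$
   Context: For $n>2$, $\kappa$ is the capacity of the disc $T=\{x\in\mathbb{R}^n:|x|<1,\ x_n=0\}$: $\kappa=\inf\int_{\mathbb{R}^n}|\nabla w|^2dx$ over smooth compactly supported $w$ with $w=1$ on $T$. When $0<\sigma_1<\dots<\sigma_m$ and $b_j>0$, $\sum b_j<1$, the displayed equation in $\lambda$ has exactly $m$ roots, all real, interlacing as $\sigma_j<\mu_j<\sigma_{j+1}$, $\sigma_m<\mu_m$. *)

From Stdlib Require Import Reals.
Open Scope R_scope.

(* Vectors in R^m are functions nat -> R; only indices 0..m-1 matter
   (index j here corresponds to index j+1 in the paper). *)

Fixpoint sumR (m : nat) (f : nat -> R) : R :=
  match m with
  | O => 0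
  | S k => sumR k f + f k
  end.

Fixpoint prod_except (m j : nat) (f : nat -> R) : R :=
  match m with
  | O => 1
  | S k => if Nat.eqb k j then prod_except k j f else prod_except k j f * f k
  end.

(* sigma_j as a function of d_j, b_j; kappa = capacity of the unit disc (n>2) *)
Definition sigma_of (n : nat) (kappa dj bj : R) : R :=
  if Nat.ltb 2 n then kappa * dj ^ (n - 2) / (4 * bj)
  else PI * dj / (2 * bj).

Definition in_dom (n m : nat) (kappa : R) (d b : nat -> R) : Prop :=
  (forall j, (j < m)%nat -> 0 < d j /\ 0 < b j) /\
  sumR m b < 1 /\
  (forall i j, (i < j < m)%nat ->
     sigma_of n kappa (d i) (b i) < sigma_of n kappa (d j) (b j)).

Definition secular (m : nat) (sigma b : nat -> R) (lam : R) : R :=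
  1 + sumR m (fun j => sigma j * b j / ((1 - sumR m b) * (sigma j - lam))).

Definition are_roots (m : nat) (sigma b mu : nat -> R) : Prop :=
  (forall i j, (i < j < m)%nat -> mu i < mu j) /\
  (forall j k, (j < m)%nat -> (k < m)%nat -> mu j <> sigma k) /\
  (forall lam, (forall k, (k < m)%nat -> lam <> sigma k) ->
     (secular m sigma b lam = 0 <-> exists j, (j < m)%nat /\ lam = mu j)).

Definition in_G (m : nat) (sigma mu : nat -> R) : Prop :=
  (forall j, (0 < m)%nat -> j = O -> 0 < sigma j) /\
  (forall j, (j + 1 < m)%nat -> sigma j < mu j /\ mu j < sigma (j + 1)%nat) /\
  (forall j, (j + 1 = m)%nat -> sigma j < mu j).

Definition rho (m : nat) (sigma mu : nat -> R) (j : nat) : R :=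
  (mu j - sigma j) / sigma j *
  prod_except m j (fun i => (mu i - sigma j) / (sigma i - sigma j)).

Definition inv_b (m : nat) (sigma mu : nat -> R) (j : nat) : R :=
  rho m sigma mu j / (1 + sumR m (rho m sigma mu)).

Definition inv_d (n m : nat) (kappa : R) (sigma mu : nat -> R) (j : nat) : R :=
  if Nat.ltb 2 n then
    Rpower (4 * sigma j * rho m sigma mu j / (kappa * (1 + sumR m (rho m sigma mu))))
           (1 / INR (n - 2))
  else 2 * sigma j * rho m sigma mu j / (PI * (1 + sumR m (rho m sigma mu))).

From Stdlib Require Import Reals Lra Lia Psatz IndefiniteDescription.
Open Scope R_scope.

(* Everything is expressed through the residues c_j = sigma_j b_j / (1 - sum b),
   for which the secular equation reads  g(lam) := 1 + sum_j c_j/(sigma_j - lam) = 0.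
   Three facts about such rational functions carry the proof.
   - Roots (section SecularRoots): for increasing poles and positive residues, g is
     positive left of sigma_1, increasing on each gap (sigma_j, sigma_{j+1}) and
     (sigma_m, oo), and changes sign across each gap (intermediate value theorem for
     the polynomial g * prod (sigma_k - lam)); so it has exactly one root per gap.
   - Partial fractions: prod_i (mu_i - lam)/(sigma_i - lam) = 1 + sum_j A_j/(sigma_j - lam)
     with A_j = sigma_j rho_j.
   - Cauchy: the matrix 1/(sigma_j - mu_k) is nonsingular (derived from partial
     fractions), so residues are determined by the m roots.
   The first gives that L maps dom(L) into G; the third, with the invertibility of
   b |-> b/(1 - sum b), gives injectivity; the second shows that the explicit formulas
   invert L on G. *)

Definition distinct_on (m : nat) (f : nat -> R) : Prop :=
  forall i j, (i < m)%nat -> (j < m)%nat -> i <> j -> f i <> f j.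

Definition increasing_on (m : nat) (f : nat -> R) : Prop :=
  forall i j, (i < j < m)%nat -> f i < f j.

Lemma increasing_distinct m f : increasing_on m f -> distinct_on m f.
Proof.
  intros Hf i j Hi Hj Hij.
  destruct (Nat.lt_total i j) as [h|[h|h]]; [|contradiction|].
  - specialize (Hf i j ltac:(lia)); lra.
  - specialize (Hf j i ltac:(lia)); lra.
Qed.

Lemma increasing_le m f i j : increasing_on m f -> (i <= j < m)%nat -> f i <= f j.
Proof.
  intros Hf Hij. destruct (Nat.eq_dec i j) as [->|Hne]; [lra|].
  left; apply Hf; lia.
Qed.

Lemma increasing_of_succ m f :
  (forall j, (S j < m)%nat -> f j < f (S j)) -> increasing_on m f.
Proof.
  intros H i j Hij. induction j as [|j IH]; [lia|].
  assert (f j < f (S j)) by (apply H; lia).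
  destruct (Nat.eq_dec i j) as [->|Hne]; [lra|].
  assert (f i < f j) by (apply IH; lia). lra.
Qed.

Lemma sumR_ext m f g :
  (forall j, (j < m)%nat -> f j = g j) -> sumR m f = sumR m g.
Proof.
  induction m as [|m IH]; intros H; simpl; [reflexivity|].
  rewrite IH by (intros; apply H; lia). rewrite H by lia. reflexivity.
Qed.

Lemma sumR_plus m f g : sumR m (fun j => f j + g j) = sumR m f + sumR m g.
Proof. induction m as [|m IH]; simpl; [lra|rewrite IH; lra]. Qed.

Lemma sumR_scal m a f : sumR m (fun j => a * f j) = a * sumR m f.
Proof. induction m as [|m IH]; simpl; [lra|rewrite IH; lra]. Qed.

Lemma sumR_le m f g :
  (forall j, (j < m)%nat -> f j <= g j) -> sumR m f <= sumR m g.
Proof.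
  induction m as [|m IH]; intros H; simpl; [lra|].
  assert (f m <= g m) by (apply H; lia).
  assert (sumR m f <= sumR m g) by (apply IH; intros; apply H; lia). lra.
Qed.

Lemma sumR_lt m f g : (0 < m)%nat ->
  (forall j, (j < m)%nat -> f j < g j) -> sumR m f < sumR m g.
Proof.
  destruct m as [|m]; [lia|]. intros _ H. simpl.
  assert (f m < g m) by (apply H; lia).
  assert (sumR m f <= sumR m g) by (apply sumR_le; intros; left; apply H; lia). lra.
Qed.

Lemma sumR_nonneg m f : (forall j, (j < m)%nat -> 0 <= f j) -> 0 <= sumR m f.
Proof.
  induction m as [|m IH]; intros H; simpl; [lra|].
  assert (0 <= f m) by (apply H; lia).
  assert (0 <= sumR m f) by (apply IH; intros; apply H; lia). lra.
Qed.

Lemma sumR_single m j f : (j < m)%nat ->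
  (forall i, (i < m)%nat -> i <> j -> f i = 0) -> sumR m f = f j.
Proof.
  induction m as [|m IH]; intros Hj H; [lia|]. simpl.
  destruct (Nat.eq_dec m j) as [->|Hne].
  - replace (sumR j f) with 0; [lra|].
    symmetry; rewrite (sumR_ext j f (fun _ => 0)) by (intros; apply H; lia).
    clear; induction j; simpl; lra.
  - rewrite IH, (H m) by (lia || (intros; apply H; lia)). lra.
Qed.

Lemma sumR_exchange m p (f : nat -> nat -> R) :
  sumR m (fun j => sumR p (fun k => f j k)) = sumR p (fun k => sumR m (fun j => f j k)).
Proof.
  induction m as [|m IH]; simpl.
  - induction p as [|p IHp]; simpl; lra.
  - rewrite IH. symmetry. apply sumR_plus.
Qed.

Fixpoint prodR (m : nat) (f : nat -> R) : R :=
  match m with O => 1 | S k => prodR k f * f k end.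

Lemma prod_except_ge m j f : (m <= j)%nat -> prod_except m j f = prodR m f.
Proof.
  induction m as [|m IH]; intros Hm; simpl; [reflexivity|].
  destruct (Nat.eqb_spec m j); [lia|]. rewrite IH by lia. reflexivity.
Qed.

Lemma prod_except_S m j f : (j < m)%nat -> prod_except (S m) j f = prod_except m j f * f m.
Proof. intros Hj. simpl. destruct (Nat.eqb_spec m j); [lia|reflexivity]. Qed.

Lemma prod_except_last j f : prod_except (S j) j f = prodR j f.
Proof. simpl. rewrite Nat.eqb_refl. apply prod_except_ge. lia. Qed.

Lemma prod_except_mul m j f : (j < m)%nat -> prod_except m j f * f j = prodR m f.
Proof.
  induction m as [|m IH]; intros Hj; [lia|].
  destruct (Nat.eq_dec j m) as [->|Hne].
  - rewrite prod_except_last. reflexivity.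
  - rewrite prod_except_S by lia. simpl. rewrite <- IH by lia. ring.
Qed.

Lemma prodR_zero m f : prodR m f = 0 <-> exists i, (i < m)%nat /\ f i = 0.
Proof.
  induction m as [|m IH]; simpl; split.
  - lra.
  - intros [i [Hi _]]; lia.
  - intros H. destruct (Rmult_integral _ _ H) as [H0|H0].
    + destruct (proj1 IH H0) as [i [Hi Hf]]. exists i; split; [lia|exact Hf].
    + exists m; split; [lia|exact H0].
  - intros [i [Hi Hf]]. destruct (Nat.eq_dec i m) as [->|Hne].
    + rewrite Hf; ring.
    + rewrite (proj2 IH) by (exists i; split; [lia|exact Hf]). ring.
Qed.

Lemma prod_except_pos m j f :
  (forall i, (i < m)%nat -> i <> j -> 0 < f i) -> 0 < prod_except m j f.
Proof.
  induction m as [|m IH]; intros H; simpl; [lra|].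
  destruct (Nat.eqb_spec m j).
  - apply IH; intros; apply H; lia.
  - apply Rmult_lt_0_compat; [apply IH; intros|]; apply H; lia.
Qed.

Lemma prod_except_zero m j f i :
  (i < m)%nat -> i <> j -> f i = 0 -> prod_except m j f = 0.
Proof.
  induction m as [|m IH]; intros Hi Hij Hf; [lia|]. simpl.
  destruct (Nat.eqb_spec m j) as [->|Hne].
  - apply IH; [lia|exact Hij|exact Hf].
  - destruct (Nat.eq_dec i m) as [->|Him].
    + rewrite Hf; ring.
    + rewrite IH by (lia || assumption). ring.
Qed.

Lemma prodR_sign m f : (forall k, (k < m)%nat -> f k < 0) -> 0 < prodR m f * (-1) ^ m.
Proof.
  induction m as [|m IH]; intros H; simpl; [lra|].
  assert (0 < prodR m f * (-1) ^ m) by (apply IH; intros; apply H; lia).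
  assert (f m < 0) by (apply H; lia).
  replace (prodR m f * f m * (-1 * (-1) ^ m))
    with ((prodR m f * (-1) ^ m) * - f m) by ring.
  apply Rmult_lt_0_compat; lra.
Qed.

Lemma prod_except_sign m j f : (j < m)%nat ->
  (forall k, (k < j)%nat -> f k < 0) -> (forall k, (j < k < m)%nat -> 0 < f k) ->
  0 < prod_except m j f * (-1) ^ j.
Proof.
  induction m as [|m IH]; intros Hj Hneg Hpos; [lia|].
  destruct (Nat.eq_dec j m) as [->|Hne].
  - rewrite prod_except_last. apply prodR_sign; exact Hneg.
  - rewrite prod_except_S by lia.
    assert (0 < prod_except m j f * (-1) ^ j)
      by (apply IH; [lia|exact Hneg|intros; apply Hpos; lia]).
    assert (0 < f m) by (apply Hpos; lia).
    replace (prod_except m j f * f m * (-1) ^ j)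
      with ((prod_except m j f * (-1) ^ j) * f m) by ring.
    apply Rmult_lt_0_compat; lra.
Qed.

Lemma continuity_pt_sumR m (F : nat -> R -> R) :
  (forall j x, continuity_pt (F j) x) ->
  forall x, continuity_pt (fun l => sumR m (fun j => F j l)) x.
Proof.
  intros HF; induction m as [|m IH]; simpl; intros x.
  - apply continuity_pt_const. intros a b; reflexivity.
  - apply (continuity_pt_plus (fun l => sumR m (fun j => F j l)) (F m)); auto.
Qed.

Lemma continuity_pt_prod_except m j (F : nat -> R -> R) :
  (forall i x, continuity_pt (F i) x) ->
  forall x, continuity_pt (fun l => prod_except m j (fun i => F i l)) x.
Proof.
  intros HF; induction m as [|m IH]; simpl; intros x.
  - apply continuity_pt_const. intros a b; reflexivity.
  - destruct (Nat.eqb m j); [apply IH|].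
    apply (continuity_pt_mult (fun l => prod_except m j (fun i => F i l)) (F m)); auto.
Qed.

Lemma continuity_pt_prodR m (F : nat -> R -> R) :
  (forall i x, continuity_pt (F i) x) ->
  forall x, continuity_pt (fun l => prodR m (fun i => F i l)) x.
Proof.
  intros HF; induction m as [|m IH]; simpl; intros x.
  - apply continuity_pt_const. intros a b; reflexivity.
  - apply (continuity_pt_mult (fun l => prodR m (fun i => F i l)) (F m)); auto.
Qed.

Lemma continuity_pt_shift (a x : R) : continuity_pt (fun l => a - l) x.
Proof.
  apply (continuity_pt_minus (fun _ => a) (fun l => l)).
  - apply continuity_pt_const; intros u v; reflexivity.
  - apply derivable_continuous_pt, derivable_pt_id.
Qed.

Lemma sign_change_root f a b : continuity f -> a < b -> f a * f b < 0 ->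
  exists z, a < z < b /\ f z = 0.
Proof.
  intros Hf Hab Hsign.
  assert (Hroot : forall g, continuity g -> g a < 0 -> 0 < g b ->
    exists z, a < z < b /\ g z = 0).
  { intros g Hg Ha Hb. destruct (IVT g a b Hg Hab Ha Hb) as [z [[Hz1 Hz2] Hz]].
    exists z. split; [split|exact Hz].
    - destruct Hz1 as [Hz1 | <-]; [exact Hz1|lra].
    - destruct Hz2 as [Hz2 | ->]; [exact Hz2|lra]. }
  destruct (Rlt_or_le (f a) 0) as [Ha|Ha].
  - apply Hroot; [exact Hf|exact Ha|nra].
  - destruct (Hroot (fun x => - f x)) as [z [Hz Hfz]].
    + apply continuity_opp, Hf.
    + assert (f a <> 0) by (intro H0; rewrite H0 in Hsign; lra). lra.
    + nra.
    + exists z. split; [exact Hz|lra].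
Qed.

Definition sec_fun (m : nat) (s c : nat -> R) (lam : R) : R :=
  1 + sumR m (fun j => c j / (s j - lam)).

(* Coefficients of the partial fraction expansion of prod_i (u_i - lam)/(s_i - lam). *)
Definition pf_coef (m : nat) (s u : nat -> R) (j : nat) : R :=
  (u j - s j) * prod_except m j (fun i => (u i - s j) / (s i - s j)).

Lemma partial_fractions m s u : distinct_on m s ->
  forall lam, (forall i, (i < m)%nat -> lam <> s i) ->
  sec_fun m s (pf_coef m s u) lam = prodR m (fun i => (u i - lam) / (s i - lam)).
Proof.
  unfold sec_fun, distinct_on.
  induction m as [|m IH]; intros Hs lam Hl; simpl; [lra|].
  specialize (IH (fun i j Hi Hj => Hs i j ltac:(lia) ltac:(lia))).
  assert (Hm : forall i, (i < m)%nat -> s m <> s i) by (intros; apply Hs; lia).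
  assert (Hlm : lam <> s m) by (apply Hl; lia).
  rewrite <- IH by (intros; apply Hl; lia).
  unfold pf_coef at 2. rewrite prod_except_last, <- (IH (s m)) by auto.
  rewrite (sumR_ext m _ (fun j => ((u m - lam) / (s m - lam)) * (pf_coef m s u j / (s j - lam))
     + (- (u m - s m) / (s m - lam)) * (pf_coef m s u j / (s j - s m)))).
  - rewrite sumR_plus, !sumR_scal. field. intro; lra.
  - intros j Hj. unfold pf_coef. rewrite prod_except_S by lia.
    assert (s j <> s m) by (intro; apply (Hm j); auto).
    assert (lam <> s j) by (apply Hl; lia).
    field. repeat split; intro; lra.
Qed.

Lemma prod_ratio_zero m s u lam : (forall i, (i < m)%nat -> lam <> s i) ->
  prodR m (fun i => (u i - lam) / (s i - lam)) = 0 <-> exists i, (i < m)%nat /\ lam = u i.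
Proof.
  intros Hl. rewrite prodR_zero. split; intros [i [Hi Hz]]; exists i; split; auto.
  - assert (lam <> s i) by auto.
    assert (u i - lam = 0); [|lra].
    replace (u i - lam) with ((u i - lam) / (s i - lam) * (s i - lam)) by (field; lra).
    rewrite Hz; ring.
  - rewrite Hz. unfold Rdiv; ring.
Qed.

Lemma sum_against_sec_fun m p s u e A :
  (forall j k, (j < m)%nat -> (k < p)%nat -> s j <> u k) ->
  (forall k, (k < p)%nat -> sumR m (fun j => e j / (s j - u k)) = 0) ->
  sumR m (fun j => e j * sec_fun p u A (s j)) = sumR m e.
Proof.
  intros Hsu He.
  rewrite (sumR_ext m _ (fun j => e j + sumR p (fun k => - A k * (e j / (s j - u k))))).
  - rewrite sumR_plus, sumR_exchange.
    rewrite (sumR_ext p _ (fun _ => 0)).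
    + replace (sumR p (fun _ => 0)) with 0; [lra|]. clear; induction p; simpl; lra.
    + intros k Hk. rewrite sumR_scal, He by exact Hk. ring.
  - intros j Hj. unfold sec_fun. rewrite Rmult_plus_distr_l, <- sumR_scal.
    f_equal; [ring|]. apply sumR_ext. intros k Hk.
    assert (s j <> u k) by auto. field. split; lra.
Qed.

(* The Cauchy matrix (1/(s_j - u_k)) is nonsingular.  Testing e against the
   product prod_i (z_i - lam)/(u_i - lam), where z agrees with s except at j0,
   isolates the coordinate e_{j0}. *)
Lemma cauchy_kernel_trivial m s u e :
  distinct_on m s -> distinct_on m u ->
  (forall j k, (j < m)%nat -> (k < m)%nat -> s j <> u k) ->
  (forall k, (k < m)%nat -> sumR m (fun j => e j / (s j - u k)) = 0) ->
  forall j0, (j0 < m)%nat -> e j0 = 0.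
Proof.
  intros Hs Hu Hsu He j0 Hj0.
  set (z := fun t i => if Nat.eqb i j0 then t else s i).
  assert (Hsel : forall t,
    e j0 * prodR m (fun i => (z t i - s j0) / (u i - s j0)) = sumR m e).
  { intros t. rewrite <- (sum_against_sec_fun m m s u e (pf_coef m u (z t))) by auto.
    rewrite (sumR_ext m _ (fun j => e j * prodR m (fun i => (z t i - s j) / (u i - s j)))).
    - symmetry. apply (sumR_single m j0); [exact Hj0|].
      intros j Hj Hne. replace (prodR m _) with 0; [ring|].
      symmetry. apply prodR_zero. exists j. split; [exact Hj|].
      unfold z. destruct (Nat.eqb_spec j j0); [contradiction|]. unfold Rdiv; ring.
    - intros j Hj. rewrite partial_fractions by (auto; intros i Hi He'; apply (Hsu j i); auto).
      reflexivity. }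
  assert (Hsum : sumR m e = 0).
  { rewrite <- (Hsel (s j0)). replace (prodR m _) with 0; [ring|].
    symmetry. apply prodR_zero. exists j0. split; [exact Hj0|].
    unfold z. rewrite Nat.eqb_refl. unfold Rdiv; ring. }
  specialize (Hsel (s j0 + 1)). rewrite Hsum in Hsel.
  destruct (Rmult_integral _ _ Hsel) as [H0|H0]; [exact H0|].
  apply prodR_zero in H0. destruct H0 as [i [Hi H0]].
  assert (u i <> s j0) by (intro; apply (Hsu j0 i); auto).
  assert (Hz : z (s j0 + 1) i - s j0 <> 0).
  { unfold z. destruct (Nat.eqb_spec i j0); [lra|].
    assert (s i <> s j0) by (apply Hs; auto). lra. }
  exfalso. apply Hz.
  replace (z (s j0 + 1) i - s j0)
    with ((z (s j0 + 1) i - s j0) / (u i - s j0) * (u i - s j0)) by (field; lra).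
  rewrite H0; ring.
Qed.

Lemma sec_fun_residues_unique m s u c c' :
  distinct_on m s -> distinct_on m u ->
  (forall j k, (j < m)%nat -> (k < m)%nat -> s j <> u k) ->
  (forall k, (k < m)%nat -> sec_fun m s c (u k) = 0) ->
  (forall k, (k < m)%nat -> sec_fun m s c' (u k) = 0) ->
  forall j, (j < m)%nat -> c j = c' j.
Proof.
  intros Hs Hu Hsu Hc Hc' j Hj.
  enough (c j - c' j = 0) by lra.
  apply (cauchy_kernel_trivial m s u (fun j => c j - c' j)); auto.
  intros k Hk.
  rewrite (sumR_ext m _ (fun j => c j / (s j - u k) + (-1) * (c' j / (s j - u k)))).
  - rewrite sumR_plus, sumR_scal.
    specialize (Hc k Hk). specialize (Hc' k Hk). unfold sec_fun in *. lra.
  - intros i Hi. assert (s i <> u k) by auto. field. lra.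
Qed.

Definition in_gap (m : nat) (s : nat -> R) (j : nat) (x : R) : Prop :=
  s j < x /\ ((S j < m)%nat -> x < s (S j)).

Lemma gaps_increasing_poles m s u :
  (forall j, (j < m)%nat -> in_gap m s j (u j)) -> increasing_on m s.
Proof.
  intros Hu. apply increasing_of_succ. intros j Hj.
  destruct (Hu j ltac:(lia)) as [H1 H2]. specialize (H2 Hj). lra.
Qed.

Lemma locate_gap m s x : (0 < m)%nat -> s 0%nat < x ->
  (forall k, (k < m)%nat -> x <> s k) -> exists j, (j < m)%nat /\ in_gap m s j x.
Proof.
  induction m as [|m IH]; intros Hm Hx Hnp; [lia|].
  destruct (Nat.eq_dec m 0) as [->|Hm0].
  - exists 0%nat. split; [lia|]. split; [exact Hx|lia].
  - destruct IH as [j [Hj [Hj1 Hj2]]]; [lia|exact Hx|intros; apply Hnp; lia|].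
    destruct (Nat.eq_dec (S j) m) as [Hlast|Hlast].
    + assert (x <> s m) by (apply Hnp; lia).
      destruct (Rlt_or_le x (s m)).
      * exists j. split; [lia|]. split; [exact Hj1|intros; subst; assumption].
      * exists m. split; [lia|]. split; [lra|lia].
    + exists j. split; [lia|]. split; [exact Hj1|intros; apply Hj2; lia].
Qed.

Section Gaps.

Variables (m : nat) (s : nat -> R).
Hypothesis Hs : increasing_on m s.

Lemma gap_separates j x : (j < m)%nat -> in_gap m s j x ->
  (forall k, (k <= j)%nat -> s k < x) /\
  (forall k, (j < k < m)%nat -> x < s k).
Proof.
  intros Hj [H1 H2]. split.
  - intros k Hkj. assert (s k <= s j) by (apply (increasing_le m); auto; lia). lra.
  - intros k Hk. assert (s (S j) <= s k) by (apply (increasing_le m); auto; lia).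
    specialize (H2 ltac:(lia)). lra.
Qed.

Lemma gap_not_pole j x : (j < m)%nat -> in_gap m s j x ->
  forall k, (k < m)%nat -> x <> s k.
Proof.
  intros Hj Hx k Hk. destruct (gap_separates j x Hj Hx) as [Hl Hr].
  destruct (Nat.le_gt_cases k j).
  - specialize (Hl k ltac:(lia)). lra.
  - specialize (Hr k ltac:(lia)). lra.
Qed.

Lemma gap_points_increasing u :
  (forall j, (j < m)%nat -> in_gap m s j (u j)) -> increasing_on m u.
Proof.
  intros Hu i j Hij.
  destruct (gap_separates i (u i) ltac:(lia) (Hu i ltac:(lia))) as [_ Hr].
  destruct (gap_separates j (u j) ltac:(lia) (Hu j ltac:(lia))) as [Hl _].
  specialize (Hr j Hij). specialize (Hl j ltac:(lia)). lra.
Qed.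

Lemma rho_pos u j : (forall k, (k < m)%nat -> 0 < s k) ->
  (forall i, (i < m)%nat -> in_gap m s i (u i)) -> (j < m)%nat -> 0 < rho m s u j.
Proof.
  intros Hpos Hu Hj. unfold rho.
  destruct (Hu j Hj) as [Huj _]. assert (0 < s j) by auto.
  apply Rmult_lt_0_compat; [apply Rdiv_lt_0_compat; lra|].
  apply prod_except_pos. intros i Hi Hij.
  destruct (Nat.lt_ge_cases i j).
  - destruct (gap_separates i (u i) Hi (Hu i Hi)) as [_ Hr].
    specialize (Hr j ltac:(lia)). assert (s i < s j) by (apply Hs; lia).
    replace ((u i - s j) / (s i - s j)) with ((s j - u i) / (s j - s i)) by (field; lra).
    apply Rdiv_lt_0_compat; lra.
  - destruct (Hu i Hi) as [Hui _]. assert (s j < s i) by (apply Hs; lia).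
    apply Rdiv_lt_0_compat; lra.
Qed.

End Gaps.

(* sec_fun multiplied by prod_k (s_k - lam): a polynomial, hence continuous everywhere. *)
Definition sec_poly (m : nat) (s c : nat -> R) (lam : R) : R :=
  prodR m (fun k => s k - lam) + sumR m (fun j => c j * prod_except m j (fun k => s k - lam)).

Lemma sec_poly_continuous m s c : continuity (sec_poly m s c).
Proof.
  intro x. unfold sec_poly.
  apply (continuity_pt_plus (fun l => prodR m (fun k => s k - l))
     (fun l => sumR m (fun j => c j * prod_except m j (fun k => s k - l)))).
  - apply (continuity_pt_prodR m (fun k l => s k - l)). intros; apply continuity_pt_shift.
  - apply (continuity_pt_sumR m (fun j l => c j * prod_except m j (fun k => s k - l))).
    intros j y.
    apply (continuity_pt_mult (fun _ => c j) (fun l => prod_except m j (fun k => s k - l))).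
    + apply continuity_pt_const; intros u v; reflexivity.
    + apply (continuity_pt_prod_except m j (fun k l => s k - l)).
      intros; apply continuity_pt_shift.
Qed.

Lemma sec_poly_eq m s c lam : (forall k, (k < m)%nat -> lam <> s k) ->
  sec_poly m s c lam = sec_fun m s c lam * prodR m (fun k => s k - lam).
Proof.
  intros H. unfold sec_poly, sec_fun. rewrite Rmult_plus_distr_r, Rmult_1_l. f_equal.
  rewrite Rmult_comm, <- sumR_scal. apply sumR_ext. intros j Hj.
  rewrite <- (prod_except_mul m j (fun k => s k - lam)) by exact Hj.
  assert (lam <> s j) by auto. field. lra.
Qed.

Lemma sec_fun_root_between m s c a b : a < b ->
  sec_poly m s c a * sec_poly m s c b < 0 ->
  (forall k, (k < m)%nat -> s k <= a \/ b <= s k) ->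
  exists z, a < z < b /\ sec_fun m s c z = 0.
Proof.
  intros Hab Hsign Hpoles.
  destruct (sign_change_root (sec_poly m s c) a b (sec_poly_continuous m s c) Hab Hsign)
    as [z [Hz Hz0]].
  assert (Hnp : forall k, (k < m)%nat -> z <> s k)
    by (intros k Hk; destruct (Hpoles k Hk); lra).
  exists z. split; [exact Hz|].
  rewrite sec_poly_eq in Hz0 by exact Hnp.
  destruct (Rmult_integral _ _ Hz0) as [H|H]; [exact H|].
  apply prodR_zero in H. destruct H as [k [Hk H]].
  exfalso; apply (Hnp k Hk); lra.
Qed.

Lemma sec_fun_pos_far m s c Y : (forall k, (k < m)%nat -> 0 <= c k) ->
  (forall k, (k < m)%nat -> 1 + sumR m c <= Y - s k) -> 0 < sec_fun m s c Y.
Proof.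
  intros Hc HY. set (C := sumR m c) in HY |- *.
  assert (HC : 0 <= C) by (apply sumR_nonneg; exact Hc).
  assert (Hle : sumR m (fun k => - / (1 + C) * c k) <= sumR m (fun k => c k / (s k - Y))).
  { apply sumR_le. intros k Hk. specialize (HY k Hk). specialize (Hc k Hk).
    replace (c k / (s k - Y)) with (- (c k * / (Y - s k))) by (field; split; intro; lra).
    replace (- / (1 + C) * c k) with (- (c k * / (1 + C))) by ring.
    apply Ropp_le_contravar, Rmult_le_compat_l; [lra|].
    apply Rinv_le_contravar; lra. }
  rewrite sumR_scal in Hle. fold C in Hle. unfold sec_fun.
  assert (- / (1 + C) * C = -1 + / (1 + C)) by (field; intro; lra).
  assert (0 < / (1 + C)) by (apply Rinv_0_lt_compat; lra). lra.
Qed.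

Lemma opposite_signs x y e : 0 < x * e -> 0 < y * - e -> x * y < 0.
Proof. intros. nra. Qed.

Section SecularRoots.

Variables (m : nat) (s c : nat -> R).
Hypothesis Hs : increasing_on m s.
Hypothesis Hc : forall j, (j < m)%nat -> 0 < c j.

(* At the pole s_j, sec_poly equals c_j prod_{k<>j} (s_k - s_j), of sign (-1)^j. *)
Lemma sec_poly_at_pole j : (j < m)%nat -> 0 < sec_poly m s c (s j) * (-1) ^ j.
Proof.
  intros Hj. unfold sec_poly.
  rewrite (proj2 (prodR_zero m (fun k => s k - s j))) by (exists j; split; auto; ring).
  rewrite (sumR_single m j) by (auto; intros i Hi Hij;
     rewrite (prod_except_zero m i (fun k => s k - s j) j); auto; ring).
  rewrite Rplus_0_l, Rmult_assoc. apply Rmult_lt_0_compat; auto.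
  apply prod_except_sign; auto.
  - intros k Hk. assert (s k < s j) by (apply Hs; lia). lra.
  - intros k Hk. assert (s j < s k) by (apply Hs; lia). lra.
Qed.

Lemma sec_poly_far Y : (forall k, (k < m)%nat -> 1 + sumR m c <= Y - s k) ->
  0 < sec_poly m s c Y * (-1) ^ m.
Proof.
  intros HY.
  assert (HC : 0 <= sumR m c) by (apply sumR_nonneg; intros; left; auto).
  rewrite sec_poly_eq by (intros k Hk; specialize (HY k Hk); lra).
  rewrite Rmult_assoc. apply Rmult_lt_0_compat.
  - apply sec_fun_pos_far; [intros; left; auto|exact HY].
  - apply prodR_sign. intros k Hk. specialize (HY k Hk). lra.
Qed.

(* Each gap contains a root: sec_poly changes sign between consecutive poles,
   and between the last pole and a point far to the right. *)
Lemma sec_fun_root_in_gap j : (j < m)%nat ->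
  exists z, in_gap m s j z /\ sec_fun m s c z = 0.
Proof.
  intros Hj. assert (Hj0 := sec_poly_at_pole j Hj).
  destruct (Nat.lt_ge_cases (S j) m) as [Hnext|Hlast].
  - assert (Hj1 := sec_poly_at_pole (S j) Hnext).
    replace ((-1) ^ S j) with (- (-1) ^ j) in Hj1 by (simpl; ring).
    destruct (sec_fun_root_between m s c (s j) (s (S j))) as [z [Hz Hz0]].
    + apply Hs; lia.
    + exact (opposite_signs _ _ _ Hj0 Hj1).
    + intros k Hk. destruct (Nat.le_gt_cases k j).
      * left. apply (increasing_le m); auto; lia.
      * right. apply (increasing_le m); auto; lia.
    + exists z. split; [split; [|intros]; lra|exact Hz0].
  - set (Y := s j + 1 + sumR m c).
    assert (HC : 0 <= sumR m c) by (apply sumR_nonneg; intros; left; auto).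
    assert (Hle : forall k, (k < m)%nat -> s k <= s j)
      by (intros; apply (increasing_le m); auto; lia).
    assert (HY := sec_poly_far Y ltac:(intros k Hk; specialize (Hle k Hk); unfold Y; lra)).
    replace ((-1) ^ m) with (- (-1) ^ j) in HY
      by (replace m with (S j) by lia; simpl; ring).
    destruct (sec_fun_root_between m s c (s j) Y) as [z [Hz Hz0]].
    + unfold Y; lra.
    + exact (opposite_signs _ _ _ Hj0 HY).
    + intros k Hk. left. auto.
    + exists z. split; [split; [|intros; lia]; lra|exact Hz0].
Qed.

(* Within a gap no pole separates two points, so each term c_k/(s_k - lam) increases. *)
Lemma sec_fun_increasing_in_gap j x y : (j < m)%nat ->
  in_gap m s j x -> in_gap m s j y -> x < y -> sec_fun m s c x < sec_fun m s c y.
Proof.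
  intros Hj Hx Hy Hxy. unfold sec_fun. apply Rplus_lt_compat_l, sumR_lt; [lia|].
  intros k Hk.
  destruct (gap_separates m s Hs j x Hj Hx) as [Hxl _].
  destruct (gap_separates m s Hs j y Hj Hy) as [_ Hyr].
  assert (Hsign : 0 < (s k - x) * (s k - y)).
  { destruct (Nat.le_gt_cases k j).
    - specialize (Hxl k ltac:(lia)). nra.
    - specialize (Hyr k ltac:(lia)). nra. }
  assert (Hck := Hc k Hk).
  assert (c k / (s k - y) - c k / (s k - x) = c k * (y - x) / ((s k - x) * (s k - y))).
  { field. split; intro H0; rewrite H0 in Hsign; lra. }
  assert (0 < c k * (y - x) / ((s k - x) * (s k - y))).
  { apply Rdiv_lt_0_compat; [apply Rmult_lt_0_compat; lra|exact Hsign]. }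
  lra.
Qed.

Lemma sec_fun_root_unique_in_gap j x y : (j < m)%nat ->
  in_gap m s j x -> in_gap m s j y -> sec_fun m s c x = 0 -> sec_fun m s c y = 0 -> x = y.
Proof.
  intros Hj Hx Hy Hx0 Hy0.
  destruct (Rtotal_order x y) as [Hxy|[Hxy|Hxy]]; [|exact Hxy|].
  - assert (H := sec_fun_increasing_in_gap j x y Hj Hx Hy Hxy). lra.
  - assert (H := sec_fun_increasing_in_gap j y x Hj Hy Hx Hxy). lra.
Qed.

(* Left of all poles every term is positive. *)
Lemma sec_fun_pos_left x : x < s 0%nat -> 0 < sec_fun m s c x.
Proof.
  intros Hx. unfold sec_fun.
  assert (0 <= sumR m (fun j => c j / (s j - x))); [|lra].
  apply sumR_nonneg. intros j Hj.
  assert (s 0%nat <= s j) by (apply (increasing_le m); auto; lia).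
  left. apply Rdiv_lt_0_compat; [auto|lra].
Qed.

Lemma sec_fun_roots : exists mu,
  (forall j, (j < m)%nat -> in_gap m s j (mu j)) /\
  (forall lam, (forall k, (k < m)%nat -> lam <> s k) ->
     sec_fun m s c lam = 0 <-> exists j, (j < m)%nat /\ lam = mu j).
Proof.
  destruct (functional_choice
    (fun j z => (j < m)%nat -> in_gap m s j z /\ sec_fun m s c z = 0)) as [mu Hmu].
  { intros j. destruct (Nat.lt_ge_cases j m) as [Hj|Hj].
    - destruct (sec_fun_root_in_gap j Hj) as [z Hz]. exists z. intros _. exact Hz.
    - exists 0. intros; lia. }
  exists mu. split; [intros j Hj; apply Hmu, Hj|].
  intros lam Hlam. split.
  - intros H0.
    destruct (Rlt_or_le lam (s 0%nat)) as [Hleft|Hright].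
    { assert (0 < sec_fun m s c lam) by (apply sec_fun_pos_left; exact Hleft). lra. }
    destruct (Nat.eq_dec m 0) as [Hm|Hm].
    { unfold sec_fun in H0. rewrite Hm in H0. simpl in H0. lra. }
    assert (lam <> s 0%nat) by (apply Hlam; lia).
    destruct (locate_gap m s lam) as [j [Hj Hgap]]; [lia|lra|exact Hlam|].
    exists j. split; [exact Hj|].
    destruct (Hmu j Hj) as [Hgap' Hroot].
    exact (sec_fun_root_unique_in_gap j lam (mu j) Hj Hgap Hgap' H0 Hroot).
  - intros [j [Hj ->]]. apply Hmu, Hj.
Qed.

End SecularRoots.

Lemma increasing_same_range m f g : increasing_on m f -> increasing_on m g ->
  (forall j, (j < m)%nat -> exists k, (k < m)%nat /\ f j = g k) ->
  (forall j, (j < m)%nat -> exists k, (k < m)%nat /\ g j = f k) ->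
  forall j, (j < m)%nat -> f j = g j.
Proof.
  intros Hf Hg A B.
  assert (H : forall N j, (j < N)%nat -> (j < m)%nat -> f j = g j).
  { induction N as [|N IH]; intros j HjN Hj; [lia|].
    destruct (A j Hj) as [k [Hk Ek]]. destruct (B j Hj) as [k' [Hk' Ek']].
    assert (k >= j)%nat.
    { destruct (Nat.lt_ge_cases k j); auto. rewrite <- IH in Ek by lia.
      assert (f k < f j) by (apply Hf; lia). lra. }
    assert (k' >= j)%nat.
    { destruct (Nat.lt_ge_cases k' j); auto. rewrite IH in Ek' by lia.
      assert (g k' < g j) by (apply Hg; lia). lra. }
    assert (g j <= g k) by (apply (increasing_le m); auto; lia).
    assert (f j <= f k') by (apply (increasing_le m); auto; lia).
    lra. }
  intros j Hj. apply (H (S j)); auto.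
Qed.

Lemma are_roots_unique m s b mu mu' : are_roots m s b mu -> are_roots m s b mu' ->
  forall j, (j < m)%nat -> mu' j = mu j.
Proof.
  intros [Hu [Hn Hr]] [Hu' [Hn' Hr']].
  apply increasing_same_range; [exact Hu'|exact Hu| |].
  - intros i Hi. apply Hr; [intros k Hk; apply Hn'; auto|].
    apply Hr'; [intros k Hk; apply Hn'; auto|exists i; auto].
  - intros i Hi. apply Hr'; [intros k Hk; apply Hn; auto|].
    apply Hr; [intros k Hk; apply Hn; auto|exists i; auto].
Qed.

Lemma secular_ext m s s' b lam : (forall j, (j < m)%nat -> s j = s' j) ->
  secular m s b lam = secular m s' b lam.
Proof.
  intros H. unfold secular. f_equal. apply sumR_ext. intros j Hj. rewrite H by exact Hj.
  reflexivity.
Qed.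

Lemma sec_fun_ext m s c c' lam : (forall j, (j < m)%nat -> c j = c' j) ->
  sec_fun m s c lam = sec_fun m s c' lam.
Proof.
  intros H. unfold sec_fun. f_equal. apply sumR_ext. intros j Hj. rewrite H by exact Hj.
  reflexivity.
Qed.

Definition residues (m : nat) (s b : nat -> R) (j : nat) : R :=
  s j * b j / (1 - sumR m b).

Lemma secular_as_sec_fun m s b lam : sumR m b < 1 ->
  (forall j, (j < m)%nat -> lam <> s j) ->
  secular m s b lam = sec_fun m s (residues m s b) lam.
Proof.
  intros HB Hl. unfold secular, sec_fun, residues. f_equal. apply sumR_ext. intros j Hj.
  assert (lam <> s j) by auto. field. split; intro; lra.
Qed.

(* b is recovered from the ratios b_j / (1 - sum b): their sum r determines sum b = r/(1+r). *)
Lemma normalized_weights_inj m b b' : sumR m b < 1 -> sumR m b' < 1 ->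
  (forall j, (j < m)%nat -> b j / (1 - sumR m b) = b' j / (1 - sumR m b')) ->
  forall j, (j < m)%nat -> b j = b' j.
Proof.
  intros HB HB' E. set (B := sumR m b) in *. set (B' := sumR m b') in *.
  assert (EB : B = B').
  { assert (Hsum : sumR m (fun j => / (1 - B) * b j) = sumR m (fun j => / (1 - B') * b' j)).
    { apply sumR_ext. intros j Hj. rewrite Rmult_comm, (Rmult_comm _ (b' j)). apply E, Hj. }
    rewrite !sumR_scal in Hsum. fold B B' in Hsum.
    assert (B * (1 - B') = B' * (1 - B)).
    { replace (B * (1 - B')) with (/ (1 - B) * B * ((1 - B) * (1 - B'))) by (field; lra).
      rewrite Hsum. field. lra. }
    nra. }
  intros j Hj. specialize (E j Hj). rewrite <- EB in E.
  replace (b j) with (b j / (1 - B) * (1 - B)) by (field; lra).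
  rewrite E. field. lra.
Qed.

Lemma normalize_weights m r : 1 + sumR m r <> 0 ->
  1 - sumR m (fun j => r j / (1 + sumR m r)) = / (1 + sumR m r).
Proof.
  intros H.
  rewrite (sumR_ext m _ (fun j => / (1 + sumR m r) * r j)) by (intros; unfold Rdiv; ring).
  rewrite sumR_scal. field. exact H.
Qed.

Lemma pf_coef_rho m s u j : s j <> 0 -> pf_coef m s u j = s j * rho m s u j.
Proof. intros H. unfold pf_coef, rho. field. exact H. Qed.

Lemma residues_inv_b m s u j : 0 <= sumR m (rho m s u) -> s j <> 0 ->
  residues m s (inv_b m s u) j = pf_coef m s u j.
Proof.
  intros HR Hs. unfold residues, inv_b.
  rewrite (normalize_weights m (rho m s u)) by lra.
  rewrite pf_coef_rho by exact Hs. field. lra.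
Qed.

Lemma sigma_pos n kappa x y : 0 < kappa -> 0 < x -> 0 < y -> 0 < sigma_of n kappa x y.
Proof.
  intros. unfold sigma_of. destruct (Nat.ltb 2 n).
  - apply Rdiv_lt_0_compat; [apply Rmult_lt_0_compat; auto; apply pow_lt; auto|lra].
  - apply Rdiv_lt_0_compat; [apply Rmult_lt_0_compat; auto; apply PI_RGT_0|lra].
Qed.

Lemma pow_strict x y k : 0 < x < y -> (0 < k)%nat -> x ^ k < y ^ k.
Proof.
  intros [Hx Hy] Hk. induction k as [|k IH]; [lia|]. destruct k; [simpl; lra|].
  assert (x ^ S k < y ^ S k) by (apply IH; lia).
  assert (0 < x ^ S k) by (apply pow_lt; auto).
  change (x * x ^ S k < y * y ^ S k). nra.
Qed.

Lemma pow_inj x y k : 0 < x -> 0 < y -> (0 < k)%nat -> x ^ k = y ^ k -> x = y.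
Proof.
  intros. destruct (Rtotal_order x y) as [h|[h|h]]; auto.
  - assert (x ^ k < y ^ k) by (apply pow_strict; auto). lra.
  - assert (y ^ k < x ^ k) by (apply pow_strict; auto). lra.
Qed.

Lemma sigma_of_inj_d n kappa x x' y : 0 < kappa -> 0 < x -> 0 < x' -> 0 < y ->
  sigma_of n kappa x y = sigma_of n kappa x' y -> x = x'.
Proof.
  intros hk Hx Hx' Hy E. unfold sigma_of in E. destruct (Nat.ltb_spec 2 n).
  - apply (pow_inj _ _ (n - 2)); auto; [lia|].
    apply (Rmult_eq_reg_l (kappa / (4 * y))); [|apply Rgt_not_eq, Rdiv_lt_0_compat; lra].
    replace (kappa / (4 * y) * x ^ (n - 2)) with (kappa * x ^ (n - 2) / (4 * y)) by (field; lra).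
    rewrite E. field. lra.
  - assert (PI <> 0) by apply PI_neq0.
    apply (Rmult_eq_reg_l (PI / (2 * y)));
      [|apply Rgt_not_eq, Rdiv_lt_0_compat; [apply PI_RGT_0|lra]].
    replace (PI / (2 * y) * x) with (PI * x / (2 * y)) by (field; lra).
    rewrite E. field. lra.
Qed.

Lemma Rpower_root x k : 0 < x -> (0 < k)%nat -> Rpower x (1 / INR k) ^ k = x.
Proof.
  intros Hx Hk. rewrite <- Rpower_pow by (unfold Rpower; apply exp_pos).
  rewrite Rpower_mult. replace (1 / INR k * INR k) with 1; [apply Rpower_1, Hx|].
  field. apply not_0_INR. lia.
Qed.

Lemma inv_formulas n m kappa s u j : 0 < kappa -> 0 < s j -> 0 < rho m s u j ->
  0 <= sumR m (rho m s u) ->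
  0 < inv_d n m kappa s u j /\
  sigma_of n kappa (inv_d n m kappa s u j) (inv_b m s u j) = s j.
Proof.
  intros hk Hs Hr HR. unfold sigma_of, inv_d, inv_b.
  set (q := 1 + sumR m (rho m s u)).
  assert (Hq : 0 < q) by (unfold q; lra).
  destruct (Nat.ltb_spec 2 n).
  - split; [unfold Rpower; apply exp_pos|].
    rewrite Rpower_root by (lia || (apply Rdiv_lt_0_compat; nra)).
    field. repeat split; lra.
  - assert (0 < PI) by apply PI_RGT_0.
    split; [apply Rdiv_lt_0_compat; nra|].
    field. repeat split; lra.
Qed.

Lemma L_maps_into_G n m kappa : 0 < kappa ->
  forall d b : nat -> R, in_dom n m kappa d b ->
  exists mu : nat -> R,
    are_roots m (fun j => sigma_of n kappa (d j) (b j)) b mu /\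
    (forall mu', are_roots m (fun j => sigma_of n kappa (d j) (b j)) b mu' ->
       forall j, (j < m)%nat -> mu' j = mu j) /\
    in_G m (fun j => sigma_of n kappa (d j) (b j)) mu.
Proof.
  intros hk d b [Hp [HB Hs]].
  set (s := fun j => sigma_of n kappa (d j) (b j)) in *.
  assert (Hc : forall j, (j < m)%nat -> 0 < residues m s b j).
  { intros j Hj. destruct (Hp j Hj) as [Hd Hb].
    assert (0 < s j) by (apply sigma_pos; auto).
    unfold residues. apply Rdiv_lt_0_compat; [apply Rmult_lt_0_compat|]; lra. }
  destruct (sec_fun_roots m s (residues m s b) Hs Hc) as [mu [Hgap Hroots]].
  assert (AR : are_roots m s b mu).
  { split; [exact (gap_points_increasing m s Hs mu Hgap)|split].
    - intros j k Hj Hk. exact (gap_not_pole m s Hs j (mu j) Hj (Hgap j Hj) k Hk).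
    - intros lam Hlam. rewrite secular_as_sec_fun by auto. apply Hroots, Hlam. }
  exists mu. split; [exact AR|split].
  - intros mu' AR'. exact (are_roots_unique m s b mu mu' AR AR').
  - split; [|split].
    + intros j Hm ->. destruct (Hp 0%nat Hm). apply sigma_pos; auto.
    + intros j Hj. replace (j + 1)%nat with (S j) by lia.
      destruct (Hgap j ltac:(lia)) as [H1 H2]. split; [exact H1|apply H2; lia].
    + intros j Hj. apply Hgap. lia.
Qed.

(* L is injective: the common roots mu fix the residues (Cauchy), hence b, hence d. *)
Lemma L_injective n m kappa : 0 < kappa ->
  forall (d b d' b' mu : nat -> R), in_dom n m kappa d b -> in_dom n m kappa d' b' ->
  (forall j, (j < m)%nat -> sigma_of n kappa (d j) (b j) = sigma_of n kappa (d' j) (b' j)) ->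
  are_roots m (fun j => sigma_of n kappa (d j) (b j)) b mu ->
  are_roots m (fun j => sigma_of n kappa (d' j) (b' j)) b' mu ->
  forall j, (j < m)%nat -> d j = d' j /\ b j = b' j.
Proof.
  intros hk d b d' b' u [Hp [HB Hs]] [Hp' [HB' _]] Heq [Hu [Hus Hr]] [_ [Hus' Hr']].
  set (s := fun j => sigma_of n kappa (d j) (b j)) in *.
  set (s' := fun j => sigma_of n kappa (d' j) (b' j)) in *.
  assert (Hspos : forall j, (j < m)%nat -> 0 < s j)
    by (intros j Hj; destruct (Hp j Hj); apply sigma_pos; auto).
  assert (Hres : forall j, (j < m)%nat -> residues m s b j = residues m s b' j).
  { apply (sec_fun_residues_unique m s u).
    - apply increasing_distinct; exact Hs.
    - apply increasing_distinct; exact Hu.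
    - intros j k Hj Hk. apply not_eq_sym, Hus; auto.
    - intros k Hk. rewrite <- secular_as_sec_fun by (auto; intros j Hj; apply Hus; auto).
      apply Hr; [intros j Hj; apply Hus; auto|exists k; auto].
    - intros k Hk. rewrite <- secular_as_sec_fun by (auto; intros j Hj; apply Hus; auto).
      rewrite (secular_ext m s s' b') by exact Heq.
      apply Hr'; [intros j Hj; apply Hus'; auto|exists k; auto]. }
  assert (Hb : forall j, (j < m)%nat -> b j = b' j).
  { apply normalized_weights_inj; [exact HB|exact HB'|].
    intros j Hj. specialize (Hres j Hj). specialize (Hspos j Hj). unfold residues in Hres.
    apply (Rmult_eq_reg_l (s j)); [|lra]. unfold Rdiv in *. rewrite <- !Rmult_assoc.
    exact Hres. }
  intros j Hj. split; [|exact (Hb j Hj)].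
  destruct (Hp j Hj), (Hp' j Hj).
  apply (sigma_of_inj_d n kappa _ _ (b j)); auto.
  rewrite (Hb j Hj) at 2. exact (Heq j Hj).
Qed.

(* L is onto G: for interlacing (sigma, mu), the explicit (d, b) lies in dom(L), has
   the prescribed sigma, and its secular function is prod (mu_i - lam)/(sigma_i - lam). *)
Lemma L_inverse n m kappa : 0 < kappa ->
  forall sigma mu : nat -> R, in_G m sigma mu ->
  in_dom n m kappa (inv_d n m kappa sigma mu) (inv_b m sigma mu) /\
  (forall j, (j < m)%nat ->
     sigma_of n kappa (inv_d n m kappa sigma mu j) (inv_b m sigma mu j) = sigma j) /\
  are_roots m sigma (inv_b m sigma mu) mu.
Proof.
  intros hk s u [Hs0 [Hmid Hlast]].
  assert (Hgap : forall j, (j < m)%nat -> in_gap m s j (u j)).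
  { intros j Hj. destruct (Nat.lt_ge_cases (S j) m).
    - destruct (Hmid j ltac:(lia)) as [H1 H2].
      replace (j + 1)%nat with (S j) in H2 by lia. split; [exact H1|intros; exact H2].
    - split; [apply Hlast; lia|intros; lia]. }
  assert (Hs := gaps_increasing_poles m s u Hgap).
  assert (Hspos : forall j, (j < m)%nat -> 0 < s j).
  { intros j Hj. assert (s 0%nat <= s j) by (apply (increasing_le m); auto; lia).
    assert (0 < s 0%nat) by (apply (Hs0 0%nat); auto; lia). lra. }
  assert (Hrho : forall j, (j < m)%nat -> 0 < rho m s u j)
    by (intros j Hj; exact (rho_pos m s Hs u j Hspos Hgap Hj)).
  assert (HR : 0 <= sumR m (rho m s u)) by (apply sumR_nonneg; intros; left; auto).
  assert (Hinv : forall j, (j < m)%nat -> 0 < inv_d n m kappa s u j /\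
    sigma_of n kappa (inv_d n m kappa s u j) (inv_b m s u j) = s j)
    by (intros j Hj; apply inv_formulas; auto).
  assert (Hmass : 1 - sumR m (inv_b m s u) = / (1 + sumR m (rho m s u)))
    by (exact (normalize_weights m (rho m s u) ltac:(lra))).
  assert (0 < / (1 + sumR m (rho m s u))) by (apply Rinv_0_lt_compat; lra).
  split; [|split; [intros j Hj; apply Hinv, Hj|]].
  - split; [|split].
    + intros j Hj. split; [apply Hinv, Hj|].
      unfold inv_b. apply Rdiv_lt_0_compat; [auto|lra].
    + lra.
    + intros i j Hij. rewrite (proj2 (Hinv i ltac:(lia))), (proj2 (Hinv j ltac:(lia))).
      apply Hs, Hij.
  - split; [exact (gap_points_increasing m s Hs u Hgap)|split].
    + intros j k Hj Hk. exact (gap_not_pole m s Hs j (u j) Hj (Hgap j Hj) k Hk).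
    + intros lam Hlam.
      rewrite secular_as_sec_fun by (auto; lra).
      rewrite (sec_fun_ext m s _ (pf_coef m s u))
        by (intros j Hj; apply residues_inv_b; [exact HR|specialize (Hspos j Hj); lra]).
      rewrite partial_fractions by (auto; apply increasing_distinct, Hs).
      apply prod_ratio_zero, Hlam.
Qed.

Theorem lemma1p2 (n m : nat) (kappa : R) (hn : (2 <= n)%nat) (hkappa : 0 < kappa) :
  (* L is well defined on dom(L) and maps it into G *)
  (forall d b : nat -> R, in_dom n m kappa d b ->
     exists mu : nat -> R,
       are_roots m (fun j => sigma_of n kappa (d j) (b j)) b mu /\
       (forall mu', are_roots m (fun j => sigma_of n kappa (d j) (b j)) b mu' ->
          forall j, (j < m)%nat -> mu' j = mu j) /\
       in_G m (fun j => sigma_of n kappa (d j) (b j)) mu) /\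
  (* L is injective on dom(L) *)
  (forall (d b d' b' mu : nat -> R), in_dom n m kappa d b -> in_dom n m kappa d' b' ->
     (forall j, (j < m)%nat -> sigma_of n kappa (d j) (b j) = sigma_of n kappa (d' j) (b' j)) ->
     are_roots m (fun j => sigma_of n kappa (d j) (b j)) b mu ->
     are_roots m (fun j => sigma_of n kappa (d' j) (b' j)) b' mu ->
     forall j, (j < m)%nat -> d j = d' j /\ b j = b' j) /\
  (* L is onto G, with the explicit inverse *)
  (forall sigma mu : nat -> R, in_G m sigma mu ->
     in_dom n m kappa (inv_d n m kappa sigma mu) (inv_b m sigma mu) /\
     (forall j, (j < m)%nat ->
        sigma_of n kappa (inv_d n m kappa sigma mu j) (inv_b m sigma mu j) = sigma j) /\
     are_roots m sigma (inv_b m sigma mu) mu).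
Proof.
  split; [|split].
  - exact (L_maps_into_G n m kappa hkappa).
  - exact (L_injective n m kappa hkappa).
  - exact (L_inverse n m kappa hkappa).
Qed.
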